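(* Consider $n$ projects with revenue functions $R_j:\{0,1,2\}\to\mathbb{R}$, $R_j(0)=0$ (i.e., $m=2$). Put $a_j=R_j(1)$, $b_j=R_j(2)-R_j(1)$, and split the projects into $A=\{j: a_j>b_j\}$ and $B=\{j: a_j\le b_j\}$. Let $f(k)$ be the maximum of $\sum_{j\in A}R_j(x_j)$ over $x_j\in\{0,1,2\}$ with $\sum_{j\in A}x_j=k$, and $g(k)$ the maximum of $\sum_{j\in B}R_j(x_j)$ over $x_j\in\{0,1,2\}$ with $\sum_{j\in B}x_j=k$. Index the projects of $B$ as $1,\dots,|B|$ in non-increasing order of $R_i(2)=a_i+b_i$. Then: (1) $f(k)$ equals the sum of the $k$ largest elements of the multiset $\{a_i: i\in A\}\cup\{b_i: i\in A\}$; (2) for $0\le k\le 2|B|$, $g(k)=\sum_{i=1}^{k/2}R_i(2)$ if $k$ is even, and if $k$ is odd, $$g(k)=\max\Bigl(g(k-1)+\max_{\frac{k+3}{2}\le i\le |B|}a_i,\ \ g(k+1)-\min_{1\le i\le \frac{k+1}{2}}b_i\Bigr),$$ where indices refer to projects of $B$ and a maximum over an empty range is $-\infty$.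
   Context: All quantities are as defined in the claim; $k$ ranges over $0\le k\le 2|A|$ for $f$ and $0\le k\le 2|B|$ for $g$. *)

From mathcomp Require Import all_boot all_order all_algebra.
Set Implicit Arguments. Unset Strict Implicit. Unset Printing Implicit Defensive.
Import Order.TTheory GRing.Theory Num.Theory.
Local Open Scope ring_scope.

Section Defs.
Variables (R : realFieldType) (n : nat).
(* rev j x = R_j(x); only x in {0,1,2} is ever used. *)
Variable rev : 'I_n -> nat -> R.

Definition aa (j : 'I_n) : R := rev j 1.
Definition bb (j : 'I_n) : R := rev j 2 - rev j 1.

Definition setA : {set 'I_n} := [set j | bb j < aa j].
Definition setB : {set 'I_n} := [set j | aa j <= bb j].

Definition maxopt (T : finType) (P : pred T) (F : T -> R) : option R :=
  if [pick x | P x] is Some x0 then Some (\big[Num.max/F x0]_(x | P x) F x)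
  else None.
Definition minopt (T : finType) (P : pred T) (F : T -> R) : option R :=
  if [pick x | P x] is Some x0 then Some (\big[Num.min/F x0]_(x | P x) F x)
  else None.

Definition optval (S : {set 'I_n}) (k : nat) : option R :=
  maxopt (fun x : {ffun 'I_n -> 'I_3} => (\sum_(j in S) (x j : nat))%N == k)
         (fun x => \sum_(j in S) rev j (x j)).

Definition fval k := optval setA k.
Definition gval k := optval setB k.

Definition topk_sum (k : nat) : R :=
  \sum_(v <- take k (sort (>=%R) ([seq aa j | j in setA] ++ [seq bb j | j in setA]))) v.
End Defs.

From mathcomp Require Import all_boot all_order all_algebra.
From mathcomp Require Import lra zify.
Set Implicit Arguments. Unset Strict Implicit. Unset Printing Implicit Defensive.
Import Order.TTheory GRing.Theory Num.Theory.
Local Open Scope ring_scope.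

(* The revenue of x units in project j is the sum of its first x marginal
   values a_j, b_j.  On A, an allocation of k units therefore collects k
   elements of the multiset {a_j} U {b_j}, so f(k) is at most the top-k sum
   (compare both with a threshold th through max(v - th, 0)); conversely the
   k largest marginal values form an allocation, because a_j > b_j puts a_j
   ahead of b_j in the sorted order.  On B, a_j <= b_j gives
   R_j(x) <= x R_j(2) / 2, so g(2t) is a fractional knapsack with capacity 2
   per project whose optimum takes the t largest R_i(2).  For odd k some
   project p receives exactly one unit; giving it 0 or 2 units instead
   reduces to the even case and bounds the revenue by g(k-1) + a_p and by
   g(k+1) - b_p, and both bounds are attained. *)

Section OptValues.
Variables (R : realFieldType) (T : finType) (P : pred T) (F : T -> R).

Lemma maxopt_eq v :
  (exists2 x, P x & F x = v) -> (forall x, P x -> F x <= v) -> maxopt P F = Some v.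
Proof.
case=> x Px <- Fle; rewrite /maxopt; case: pickP => [x0 Px0|/(_ x)]; last by rewrite Px.
by congr Some; apply/le_anti; rewrite bigmax_le ?Fle // (bigmax_sup x).
Qed.

Lemma minopt_eq v :
  (exists2 x, P x & F x = v) -> (forall x, P x -> v <= F x) -> minopt P F = Some v.
Proof.
case=> x Px <- Fge; rewrite /minopt; case: pickP => [x0 Px0|/(_ x)]; last by rewrite Px.
by congr Some; apply/le_anti; rewrite le_bigmin ?Fge // (bigmin_inf x).
Qed.

Lemma maxopt_none : (forall x, ~~ P x) -> maxopt P F = None.
Proof. by move=> noP; rewrite /maxopt; case: pickP => // x; rewrite (negbTE (noP x)). Qed.

End OptValues.

Lemma big_update (V : Type) (idx : V) (op : Monoid.com_law idx) (I : finType) (X : Type)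
    (G : I -> X -> V) (y : I -> X) (p : I) (m : X) :
  op (\big[op/idx]_i G i (if i == p then m else y i)) (G p (y p)) =
  op (\big[op/idx]_i G i (y i)) (G p m).
Proof.
rewrite (bigD1 p) // [in RHS](bigD1 p) //= eqxx.
rewrite Monoid.mulmAC [RHS]Monoid.mulmAC; congr (op _ _); first exact: Monoid.mulmC.
by apply: eq_bigr => i /negbTE ->.
Qed.

Lemma sum_prefix_const (R : nmodType) N t (v : R) : (t <= N)%N ->
  \sum_(i < N | (i < t)%N) v = v *+ t.
Proof. by move=> tN; rewrite (big_ord_narrow (F := fun _ => v) tN) sumr_const card_ord. Qed.

Section FractionalPrefix.
Variables (R : realFieldType) (N : nat) (c : 'I_N -> R).
Hypothesis c_noninc : forall i j : 'I_N, (i <= j)%N -> c j <= c i.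

Lemma prefix_threshold t : exists th,
  (forall i : 'I_N, (i < t)%N -> th <= c i) /\ (forall i : 'I_N, (t <= i)%N -> c i <= th).
Proof.
case: N c c_noninc => [|N'] c' c'_noninc; first by exists 0; split => -[].
exists (c' (inord (minn t.-1 N'))); split => i it; apply: c'_noninc;
  rewrite inordK ?ltnS ?geq_minr //; have := ltn_ord i; lia.
Qed.

Lemma weighted_sum_le_prefix_sum (w : 'I_N -> R) t :
  (forall i, 0 <= w i <= 1) -> \sum_i w i = t%:R ->
  \sum_i w i * c i <= \sum_(i < N | (i < t)%N) c i.
Proof.
move=> w01 wt; have [th [c_ge c_le]] := prefix_threshold t.
have tN : (t <= N)%N.
  rewrite -(ler_nat R) -wt -[N in N%:R]card_ord -sumr_const.
  by apply: ler_sum => i _; case/andP: (w01 i).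
pose d (i : 'I_N) : R := (i < t)%N%:R.
have sum_d : \sum_i d i = t%:R.
  by rewrite -(sum_prefix_const 1 tN) [RHS]big_mkcond; apply: eq_bigr => i _; rewrite /d; case: ifP.
have shift : \sum_i w i * c i - \sum_(i < N | (i < t)%N) c i =
             \sum_i (w i - d i) * (c i - th).
  have -> : \sum_(i < N | (i < t)%N) c i = \sum_i d i * c i.
    by rewrite big_mkcond; apply: eq_bigr => i _; rewrite /d; case: ifP; rewrite ?mul1r ?mul0r.
  rewrite -sumrB (eq_bigr (fun i => (w i - d i) * (c i - th) + (w i - d i) * th)).
    by rewrite big_split /= -mulr_suml sumrB wt sum_d subrr mul0r addr0.
  by move=> i _; rewrite -mulrDr subrK mulrBl.
rewrite -subr_le0 shift; apply: sumr_le0 => i _; rewrite /d; case: ltnP => hi.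
  by apply: mulr_le0_ge0; rewrite ?subr_le0 ?subr_ge0 ?c_ge //; case/andP: (w01 i).
by apply: mulr_ge0_le0; rewrite ?subr0 ?subr_le0 ?c_le //; case/andP: (w01 i).
Qed.

End FractionalPrefix.

Lemma topk_threshold (R : realDomainType) (s : seq R) k : (k <= size s)%N ->
  exists th, \sum_(v <- s) Num.max (v - th) 0 = \sum_(v <- take k (sort >=%R s)) v - k%:R * th.
Proof.
move=> ks; set S := sort _ s; have kS : (k <= size S)%N by rewrite size_sort.
have S_sorted : sorted >=%R S by apply: sort_sorted => x y; apply: le_total.
have sS : perm_eq s S by rewrite perm_sym perm_sort perm_refl.
clearbody S.
have ge_trans : transitive (>=%R : rel R) by move=> ? ? ? h1 h2; apply: le_trans h2 h1.
have nth_le := sorted_leq_nth ge_trans (@lexx _ R) 0 S_sorted.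
exists (nth 0 S k.-1); set th := nth 0 S k.-1.
rewrite (perm_big S sS) -[in LHS](cat_take_drop k S) big_cat /=.
(* [set m := size S] merges the copies of [size S] taken at type [R] and at its
   eqType view, which lia would otherwise see as unrelated atoms. *)
rewrite [X in _ + X]big1_seq ?addr0 => [|v /andP[_ /(nthP 0)[i]]]; last first.
  rewrite size_drop nth_drop => iS <-; apply/max_r; rewrite subr_le0.
  by apply: nth_le; rewrite ?inE; move: iS; set m := size S; lia.
rewrite (eq_big_seq (fun v => v - th)) => [|v /(nthP 0)[i]]; last first.
  rewrite size_takel // => ik <-; rewrite nth_take //; apply/max_l; rewrite subr_ge0.
  by apply: nth_le; rewrite ?inE; move: kS; set m := size S; lia.
by rewrite sumrB big_const_seq count_predT iter_addr_0 size_takel // mulr_natl.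
Qed.

Lemma mem_take_sorted_lt (T : eqType) (R : numDomainType) (f : T -> R) (s : seq T) k x y :
  sorted (fun u w => f w <= f u) s -> x \in s -> f y < f x ->
  y \in take k s -> x \in take k s.
Proof.
move=> s_sorted xs fyx yk; have ys := mem_take yk; rewrite in_take // in yk.
rewrite in_take //; apply: leq_ltn_trans _ yk; rewrite leqNgt; apply/negP => yx.
have ge_trans : transitive (fun u w => f w <= f u) by move=> v u w h1 h2; apply: le_trans h2 h1.
have := sorted_leq_nth ge_trans (fun u => lexx (f u)) x s_sorted.
move/(_ (index y s) (index x s)); rewrite !inE !index_mem ys xs ltnW // nth_index // nth_index //.
by move=> /(_ isT isT isT); rewrite (lt_geF fyx).
Qed.

Lemma big_pairs (V : Type) (idx : V) (op : Monoid.com_law idx) (I J : finType)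
    (X : seq (I * J)) (F : I * J -> V) :
  uniq X -> \big[op/idx]_(u <- X) F u = \big[op/idx]_i \big[op/idx]_(j | (i, j) \in X) F (i, j).
Proof. by move=> X_uniq; rewrite big_uniq // pair_big_dep; apply: eq_big => -[]. Qed.

Section ProjectsA.
Variables (R : realFieldType) (n : nat) (rev : 'I_n -> nat -> R).
Hypothesis rev0 : forall j, rev j 0%N = 0.

Local Notation A := (setA rev).
Local Notation L := ([seq aa rev j | j in A] ++ [seq bb rev j | j in A]).

Lemma rev_sub_le_max j m th : (m <= 2)%N ->
  rev j m - m%:R * th <= Num.max (aa rev j - th) 0 + Num.max (bb rev j - th) 0.
Proof.
rewrite /aa /bb; case: m => [|[|[|//]]] _; rewrite ?rev0;
  by case: (leP (rev j 1 - th) 0); case: (leP (rev j 2 - rev j 1 - th) 0); lra.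
Qed.

Lemma big_units (F : R -> R) : \sum_(v <- L) F v = \sum_(j in A) (F (aa rev j) + F (bb rev j)).
Proof. by rewrite big_split big_cat !big_image. Qed.

Lemma fval_le_topk k (x : {ffun 'I_n -> 'I_3}) : (k <= 2 * #|A|)%N ->
  (\sum_(j in A) x j)%N = k -> \sum_(j in A) rev j (x j) <= topk_sum rev k.
Proof.
move=> kA xk; have [|th th_eq] := @topk_threshold _ L k.
  by rewrite size_cat !size_image addnn -mul2n.
rewrite -(lerD2r (- (k%:R * th))) /topk_sum -th_eq big_units -xk natr_sum mulr_suml -sumrB.
by apply: ler_sum => j _; rewrite rev_sub_le_max // -ltnS.
Qed.

(* (j, true) is the first unit invested in project j, worth a_j, and (j, false)
   the second one, worth b_j. *)
Definition unit_value (u : 'I_n * bool) := if u.2 then aa rev u.1 else bb rev u.1.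
Local Notation units := ([seq (j, true) | j in A] ++ [seq (j, false) | j in A]).
Definition best_units k := take k (sort (fun u w => unit_value w <= unit_value u) units).
Definition best_alloc k : {ffun 'I_n -> 'I_3} :=
  [ffun j => inord #|[pred b | (j, b) \in best_units k]|].

Lemma mem_units u : (u \in units) = (u.1 \in A).
Proof.
case: u => j b; rewrite mem_cat; apply/orP/idP => [[]/mapP[j' + [-> _]] | jA]; rewrite ?mem_enum //.
by case: b jA => jA; [left | right]; rewrite map_f ?mem_enum.
Qed.

Lemma units_uniq : uniq units.
Proof.
rewrite cat_uniq !map_inj_uniq ?enum_uniq //= ?andbT; try by move=> ? ? [].
by apply/hasP => -[_ /mapP[j _ ->] /mapP[j' _ []]].
Qed.

Lemma map_units : map unit_value units = L.
Proof. by rewrite map_cat -!map_comp. Qed.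

Lemma best_units_fst k u : u \in best_units k -> u.1 \in A.
Proof. by move/mem_take; rewrite mem_sort mem_units. Qed.

Lemma best_units_closed k j : (j, false) \in best_units k -> (j, true) \in best_units k.
Proof.
move=> jk; have jA := best_units_fst jk; apply: mem_take_sorted_lt jk.
- by apply: sort_sorted => u w; apply: le_total.
- by rewrite mem_sort mem_units.
- by move: jA; rewrite inE.
Qed.

Lemma size_best_units k : (k <= 2 * #|A|)%N -> size (best_units k) = k.
Proof. by move=> kA; rewrite size_takel // size_sort size_cat !size_image addnn -mul2n. Qed.

Lemma map_best_units k : map unit_value (best_units k) = take k (sort >=%R L).
Proof. by rewrite map_take (map_sort (leT := >=%R)) ?map_units. Qed.

Lemma big_best_units (V : Type) (idx : V) (op : Monoid.com_law idx) k F :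
  \big[op/idx]_(u <- best_units k) F u =
  \big[op/idx]_(j in A) \big[op/idx]_(b | (j, b) \in best_units k) F (j, b).
Proof.
rewrite big_pairs ?take_uniq ?sort_uniq ?units_uniq // [RHS]big_mkcond /=.
apply: eq_bigr => j _; case: ifPn => // jA; rewrite big_pred0 // => b.
by apply: contraNF jA => /best_units_fst.
Qed.

Lemma best_alloc_E k j : best_alloc k j = #|[pred b | (j, b) \in best_units k]| :> nat.
Proof. by rewrite ffunE inordK // ltnS (leq_trans (max_card _)) ?card_bool. Qed.

Lemma rev_best_alloc k j :
  rev j (best_alloc k j) = \sum_(b | (j, b) \in best_units k) unit_value (j, b).
Proof.
rewrite best_alloc_E -sum1_card big_mkcond [RHS]big_mkcond !big_bool !inE /=.
have := @best_units_closed k j; rewrite /unit_value /aa /bb /=.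
case: ((j, true) \in _); case: ((j, false) \in _) => /= closed.
- by rewrite addrC subrK.
- by rewrite addr0.
- by have := closed isT.
- by rewrite rev0 addr0.
Qed.

Lemma fval_eq k : (k <= 2 * #|A|)%N -> fval rev k = Some (topk_sum rev k).
Proof.
move=> kA; apply: maxopt_eq => [|x /eqP]; last exact: fval_le_topk.
exists (best_alloc k).
  rewrite -[X in _ == X](size_best_units kA) -sum1_size big_best_units.
  by apply/eqP/eq_bigr => j _; rewrite best_alloc_E sum1_card.
rewrite /topk_sum -map_best_units big_map big_best_units.
by apply: eq_bigr => j _; rewrite rev_best_alloc.
Qed.

End ProjectsA.

Section ProjectsB.
Variables (R : realFieldType) (n : nat) (rev : 'I_n -> nat -> R).
Hypothesis rev0 : forall j, rev j 0%N = 0.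

Lemma rev_le_half_rev2 j m : j \in setB rev -> (m <= 2)%N -> rev j m <= m%:R / 2 * rev j 2.
Proof.
rewrite inE /aa /bb => ab; case: m => [|[|[|//]]] _; first by rewrite rev0 mul0r mul0r.
  by rewrite mul1r; lra.
by rewrite divff ?mul1r ?pnatr_eq0.
Qed.

Local Notation N := #|setB rev|.
Variable sigma : 'I_N -> 'I_n.
Hypotheses (sigma_inj : injective sigma) (sigma_B : forall i, sigma i \in setB rev).
Hypothesis sigma_sorted : forall i i' : 'I_N, (i <= i')%N -> rev (sigma i') 2 <= rev (sigma i) 2.

Local Notation c i := (rev (sigma i) 2).
Local Notation top t := (\sum_(i < N | (i < t)%N) c i).

Definition alloc k (y : 'I_N -> nat) := (forall i, y i <= 2)%N /\ (\sum_i y i)%N = k.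
Definition revenue (y : 'I_N -> nat) := \sum_i rev (sigma i) (y i).
Definition top_alloc t (i : 'I_N) := if (i < t)%N then 2%N else 0%N.

Lemma setB_imset : setB rev = sigma @: setT.
Proof.
apply/eqP; rewrite eq_sym eqEcard card_imset // cardsT card_ord leqnn andbT.
by apply/subsetP => _ /imsetP[i _ ->].
Qed.

Lemma big_setB (V : Type) (idx : V) (op : Monoid.com_law idx) (F : 'I_n -> V) :
  \big[op/idx]_(j in setB rev) F j = \big[op/idx]_(i < N) F (sigma i).
Proof.
rewrite (eq_bigl (mem (sigma @: setT))) => [|j]; last by rewrite -setB_imset.
rewrite big_imset /=; last by move=> ? ? _ _; apply: sigma_inj.
by apply: eq_bigl => i; rewrite inE.
Qed.

Lemma gval_eq k v : (exists2 y, alloc k y & revenue y = v) ->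
  (forall y, alloc k y -> revenue y <= v) -> gval rev k = Some v.
Proof.
move=> [y [y2 yk] <-] ub; apply: maxopt_eq.
  pose x := [ffun j => inord (odflt 0%N (omap y [pick i | sigma i == j])) : 'I_3].
  have xE i : x (sigma i) = y i :> nat.
    rewrite ffunE; case: pickP => [i' /eqP/sigma_inj -> | /(_ i)]; last by rewrite eqxx.
    by rewrite /= inordK // ltnS y2.
  exists x; last by rewrite big_setB; apply: eq_bigr => i _; rewrite xE.
  by rewrite big_setB -yk; apply/eqP; apply: eq_bigr => i _; rewrite xE.
move=> x /eqP; rewrite !big_setB => xk.
by apply: ub; split=> // i; rewrite -ltnS ltn_ord.
Qed.

Lemma alloc_update k k' y p m : alloc k y -> (m <= 2)%N -> (k' + y p = k + m)%N ->
  alloc k' [eta y with p |-> m].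
Proof.
move=> [y2 yk] m2 kk'; split=> [i|] /=; first by case: eqP.
apply/eqP; rewrite -(eqn_add2r (y p)) kk' -yk.
by rewrite (big_update _ (fun _ v => v)).
Qed.

Lemma revenue_update y p m :
  revenue [eta y with p |-> m] = revenue y - rev (sigma p) (y p) + rev (sigma p) m.
Proof.
apply: (addIr (rev (sigma p) (y p))); rewrite addrAC subrK.
exact: (big_update _ (fun i v => rev (sigma i) v)).
Qed.

Lemma alloc_top t : (t <= N)%N -> alloc (2 * t) (top_alloc t).
Proof.
move=> tN; split=> [i|]; first by rewrite /top_alloc; case: ifP.
by rewrite -big_mkcond /= (sum_prefix_const _ tN) -mulr_natr natn.
Qed.

Lemma revenue_top t : revenue (top_alloc t) = top t.
Proof. by rewrite [RHS]big_mkcond; apply: eq_bigr => i _; rewrite /top_alloc; case: ifP. Qed.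

Lemma revenue_le_top t y : alloc (2 * t) y -> revenue y <= top t.
Proof.
move=> [y2 yt].
apply: le_trans (weighted_sum_le_prefix_sum sigma_sorted (w := fun i => (y i)%:R / 2) _ _).
- by apply: ler_sum => i _; rewrite rev_le_half_rev2.
- by move=> i; rewrite divr_ge0 // ler_pdivrMr // mul1r ler_nat y2.
- by rewrite -mulr_suml -natr_sum yt natrM mulrAC divff ?mul1r ?pnatr_eq0.
Qed.

Lemma gval_even t : (t <= N)%N -> gval rev (2 * t) = Some (top t).
Proof.
move=> tN; apply: gval_eq; last exact: revenue_le_top.
by exists (top_alloc t); [apply: alloc_top | apply: revenue_top].
Qed.

Lemma alloc_odd_one k y : alloc k y -> odd k -> exists p, y p = 1%N.
Proof.
move=> [y2 <-]; case: (pickP (fun i => y i == 1%N)) => [p /eqP|no1]; first by exists p.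
rewrite (big_morph odd oddD erefl) big1 // => i _.
by have := y2 i; have := no1 i; case: (y i) => [|[|[|]]].
Qed.

Lemma revenue_odd_le t y : alloc (2 * t).+1 y -> exists p,
  revenue y <= top t + aa rev (sigma p) /\ revenue y <= top t.+1 - bb rev (sigma p).
Proof.
move=> ya; have [p yp1] : exists p, y p = 1%N by apply: alloc_odd_one ya _; rewrite /= oddM.
exists p; split.
  have /revenue_le_top : alloc (2 * t) [eta y with p |-> 0%N].
    by apply: alloc_update ya _ _; rewrite ?yp1 ?addn0 ?addn1.
  by rewrite revenue_update yp1 rev0 addr0 /aa lerBlDr.
have /revenue_le_top : alloc (2 * t.+1) [eta y with p |-> 2%N].
  by apply: alloc_update ya _ _; rewrite ?yp1 // addn1 addn2 mulnS add2n.
by rewrite revenue_update yp1 /aa /bb => le; lra.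
Qed.

Lemma revenue_top_add_aa t (p : 'I_N) : (t <= N)%N -> (t <= p)%N ->
  exists2 y, alloc (2 * t).+1 y & revenue y = top t + aa rev (sigma p).
Proof.
move=> tN tp; exists [eta top_alloc t with p |-> 1%N].
  by apply: alloc_update (alloc_top tN) _ _; rewrite // /top_alloc ltnNge tp addn0 addn1.
by rewrite revenue_update revenue_top /top_alloc ltnNge tp rev0 subr0.
Qed.

Lemma revenue_top_sub_bb t (p : 'I_N) : (t < N)%N -> (p <= t)%N ->
  exists2 y, alloc (2 * t).+1 y & revenue y = top t.+1 - bb rev (sigma p).
Proof.
move=> tN pt; exists [eta top_alloc t.+1 with p |-> 1%N].
  apply: alloc_update (alloc_top tN) _ _; rewrite // /top_alloc ltnS pt.
  by rewrite addn1 addn2 mulnS add2n.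
by rewrite revenue_update revenue_top /top_alloc ltnS pt /bb addrAC opprB addrA.
Qed.

Lemma gval_odd t : (t < N)%N ->
  exists gm gp mb,
    [/\ gval rev (2 * t) = Some gm, gval rev (2 * t.+1) = Some gp,
       minopt (fun i : 'I_N => (i < t.+1)%N) (fun i => bb rev (sigma i)) = Some mb &
       gval rev (2 * t).+1 = Some
         (match maxopt (fun i : 'I_N => (t.+1 <= i)%N) (fun i => aa rev (sigma i)) with
          | Some ma => Num.max (gm + ma) (gp - mb)
          | None => gp - mb
          end)].
Proof.
move=> tN; pose i0 : 'I_N := Ordinal (leq_ltn_trans (leq0n t) tN).
have [pb pb_t pb_min] := @arg_minP _ _ _ i0 (fun i : 'I_N => (i < t.+1)%N)
                                   (fun i => bb rev (sigma i)) isT.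
exists (top t), (top t.+1), (bb rev (sigma pb)); split.
- exact: gval_even (ltnW tN).
- exact: gval_even tN.
- by apply: minopt_eq => //; exists pb.
have odd_bound y : alloc (2 * t).+1 y ->
    (exists2 p : 'I_N, (t < p)%N & revenue y <= top t + aa rev (sigma p)) \/
    revenue y <= top t.+1 - bb rev (sigma pb).
  move=> /revenue_odd_le[p [le_a le_b]]; case: (ltnP t p) => tp; first by left; exists p.
  by right; apply: le_trans le_b _; rewrite lerD2l lerN2 pb_min.
case: (pickP (fun i : 'I_N => (t.+1 <= i)%N)) => [i1 t_i1|no_i]; last first.
  rewrite maxopt_none => [|i]; last by rewrite no_i.
  apply: gval_eq => [|y /odd_bound[[p tp]|//]]; first exact: revenue_top_sub_bb.
  by rewrite no_i in tp.
have [pa pa_t pa_max] := @arg_maxP _ _ _ i1 (fun i : 'I_N => (t.+1 <= i)%N)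
                                   (fun i => aa rev (sigma i)) t_i1.
rewrite (@maxopt_eq _ _ _ _ (aa rev (sigma pa))) //; last by exists pa.
apply: gval_eq => [|y /odd_bound[[p tp le_a]|le_b]]; rewrite ?le_max.
- case: leP => _; first exact: revenue_top_sub_bb.
  exact: revenue_top_add_aa (ltnW tN) (ltnW pa_t).
- by rewrite (le_trans le_a) // lerD2l; apply: pa_max.
- by rewrite le_b orbT.
Qed.

End ProjectsB.

Unset Implicit Arguments.

Theorem lemma7 (R : realFieldType) (n : nat) (rev : 'I_n -> nat -> R)
  (hrev0 : forall j, rev j 0%N = 0)
  (sigma : 'I_#|setB rev| -> 'I_n)
  (hinj : injective sigma)
  (hB : forall i, sigma i \in setB rev)
  (hsort : forall i i' : 'I_#|setB rev|, (i <= i')%N -> rev (sigma i') 2%N <= rev (sigma i) 2%N) :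
  (forall k, (k <= 2 * #|setA rev|)%N -> fval rev k = Some (topk_sum rev k)) /\
  (forall k, (k <= 2 * #|setB rev|)%N ->
     if ~~ odd k then
       gval rev k = Some (\sum_(i < #|setB rev| | (i < k./2)%N) rev (sigma i) 2%N)
     else
       exists gm gp mb,
         [/\ gval rev k.-1 = Some gm, gval rev k.+1 = Some gp,
             minopt (fun i : 'I_#|setB rev| => (i < k.+1./2)%N) (fun i => bb rev (sigma i)) = Some mb &
             gval rev k = Some
               (match maxopt (fun i : 'I_#|setB rev| => (k.+1./2 <= i)%N)
                             (fun i => aa rev (sigma i)) with
                | Some ma => Num.max (gm + ma) (gp - mb)
                | None => gp - mb
                end)]).
Proof.
split=> [k|k kB]; first exact: fval_eq.
have := odd_double_half k; set t := k./2.
case: ifPn => [/negbTE-> | /negbNE->] k_eq.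
  rewrite -{1}k_eq add0n -mul2n; apply: gval_even => //.
  by move: kB; rewrite -k_eq add0n -mul2n; lia.
have [-> -> ->] : [/\ k.-1 = (2 * t)%N, k.+1./2 = t.+1 & k.+1 = (2 * t.+1)%N].
  by rewrite -k_eq add1n /= doubleK !mul2n doubleS.
rewrite -{1}k_eq add1n -mul2n; apply: gval_odd => //.
by move: kB; rewrite -k_eq add1n -mul2n; lia.
Qed.
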